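(* Let $\kappa$ be an infinite cardinal, $\alpha^*$ an ordinal, and $\bar A=\langle A_\alpha:\alpha<\alpha^*\rangle$ a sequence of subsets of $\kappa$ such that for each $\alpha<\alpha^*$, $A_\alpha$ does not belong to the ideal of subsets of $\kappa$ generated by $\{A_\beta:\beta<\alpha\}$. If $\mathrm{rk}_{\bar A}(\kappa)\ge\kappa^+$, then there is a sequence $\langle\alpha_n:n<\omega\rangle$ with $\alpha_n<\alpha_{n+1}<\kappa$ for all $n$, such that for every $\ell<k<\omega$ there is $\alpha<\alpha^*$ with $$A_\alpha\cap\{\alpha_\ell,\alpha_{\ell+1},\dots,\alpha_k\}=\{\alpha_{\ell+1},\dots,\alpha_k\}.$$
   Context: The rank $\mathrm{rk}_{\bar A}$ is the function from subsets of $\kappa$ to ordinals or $\infty$ defined by: $\mathrm{rk}_{\bar A}(A)\ge 0$ always, and $\mathrm{rk}_{\bar A}(A)\ge\zeta$ iff for every $\xi<\zeta$ there is $\alpha<\alpha^*$ such that $A\neq A\cap A_\alpha$ (i.e. $A\not\subseteq A_\alpha$) and $\mathrm{rk}_{\bar A}(A\cap A_\alpha)\ge\xi$. $\mathrm{rk}_{\bar A}(A)$ is the largest $\zeta$ with $\mathrm{rk}_{\bar A}(A)\ge\zeta$, or $\infty$ if it is $\ge\zeta$ for all ordinals $\zeta$. *)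

(* Ordinals are represented by well-ordered types. *)
From Stdlib Require Import List.
Import ListNotations.

Definition well_order {W : Type} (R : W -> W -> Prop) : Prop :=
  well_founded R /\
  (forall x y z, R x y -> R y z -> R x z) /\
  (forall x y, R x y \/ x = y \/ R y x).

(* (K, ltK) is (the well-ordered set of ordinals below) an infinite cardinal:
   a well-order, infinite, and not injectable into any
   proper initial segment. *)
Definition infinite_cardinal {K : Type} (ltK : K -> K -> Prop) : Prop :=
  well_order ltK /\
  (exists f : nat -> K, forall m n, f m = f n -> m = n) /\
  (forall (x : K) (g : K -> {y : K | ltK y x}),
      ~ (forall u v, g u = g v -> u = v)).

(* A_a does not belong to the ideal generated by {A_b : b < a}, i.e. it is not
   covered by finitely many A_b with b < a *)
Definition not_in_prev_ideal {K I : Type} (ltI : I -> I -> Prop)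
  (A : I -> K -> Prop) : Prop :=
  forall a : I, ~ (exists s : list I,
      (forall b, In b s -> ltI b a) /\
      (forall x, A a x -> exists b, In b s /\ A b x)).

(* rk_ge A R B w : "rk_{A}(B) >= zeta", where zeta is the ordinal (order type
   of the initial segment below w) of w in the well-order (W,R). *)
Inductive rk_ge {K I W : Type} (A : I -> K -> Prop) (R : W -> W -> Prop)
  : (K -> Prop) -> W -> Prop :=
| rk_ge_intro (B : K -> Prop) (w : W) :
    (forall v, R v w ->
       exists a : I, (exists x, B x /\ ~ A a x) /\
                     rk_ge A R (fun x => B x /\ A a x) v) ->
    rk_ge A R B w.

(* rk_{A}(kappa) >= kappa^+ : rank >= zeta for every ordinal zeta < kappa^+,
   i.e. every ordinal zeta of cardinality <= kappa. *)
Definition rk_ge_kappa_plus {K I : Type} (A : I -> K -> Prop) : Prop :=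
  forall (W : Type) (R : W -> W -> Prop), well_order R ->
  forall w : W,
    (exists g : {v : W | R v w} -> K, forall u v, g u = g v -> u = v) ->
    rk_ge A R (fun _ => True) w.

(* Hessenberg's theorem [kappa * kappa = kappa], proved with Goedel's pairing order, makes
   [kappa^+] regular.  Hence if a family [F] of subsets of [kappa] has members of every rank
   below [kappa^+], then for some point [y] so does the family of all [C ∩ A_a] with [C] in
   [F] and [y ∈ C \ A_a]: otherwise the [kappa] ordinals witnessing the failures, summed, give
   an ordinal below [kappa^+] that no member of [F] reaches.  Iterating from [{kappa}] yields
   points [x_0, x_1, ...] such that for [l < k] some [A_a] omits [x_l] but contains
   [x_(l+1), ..., x_k]; they are pairwise distinct, so a subsequence is increasing.  Neither the
   well-ordering of the indices nor the ideal condition on [A] is needed. *)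

From Stdlib Require Import List Arith Lia FinFun.
From Stdlib Require Import Classical ClassicalEpsilon ProofIrrelevance FunctionalExtensionality.
From Stdlib Require Import Relation_Operators Lexicographic_Product Inverse_Image.
Import ListNotations.

Definition injects (A B : Type) : Prop := exists f : A -> B, forall a b, f a = f b -> a = b.

Lemma injects_trans A B C : injects A B -> injects B C -> injects A C.
Proof. intros [f Hf] [g Hg]. exists (fun a => g (f a)). auto. Qed.

Lemma injects_prod A B A' B' : injects A A' -> injects B B' -> injects (A * B) (A' * B').
Proof.
  intros [f Hf] [g Hg]. exists (fun p => (f (fst p), g (snd p))).
  intros [a b] [a' b'] E. injection E as Ea Eb. f_equal; auto.
Qed.

Lemma injects_option_square A (a b : A) : a <> b -> injects (option A) (A * A).
Proof.
  intro Hab. exists (fun o => match o with Some x => (x, x) | None => (a, b) end).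
  intros [x|] [y|] E; inversion E; subst; congruence.
Qed.

Lemma Finite_injects A B : injects A B -> Finite B -> Finite A.
Proof.
  intros [f Hf] [l Hl].
  pose (preimage := fun b => match excluded_middle_informative (exists a, f a = b) with
                             | left h => [proj1_sig (constructive_indefinite_description _ h)]
                             | right _ => [] end).
  exists (flat_map preimage l). intro a. apply in_flat_map. exists (f a). split; [apply Hl|].
  unfold preimage. destruct (excluded_middle_informative _) as [h|h]; [|exfalso; eauto].
  destruct (constructive_indefinite_description _ h) as [a' Ha']. left. apply Hf, Ha'.
Qed.

Lemma Finite_prod A B : Finite A -> Finite B -> Finite (A * B).
Proof. intros [l Hl] [m Hm]. exists (list_prod l m). intros [a b]. apply in_prod; auto. Qed.

Lemma Finite_option A : Finite A -> Finite (option A).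
Proof. intros [l Hl]. exists (None :: map Some l). intros [a|]; simpl; auto using in_map. Qed.

Lemma nat_not_Finite : ~ Finite nat.
Proof.
  intros [l Hl]. assert (H : list_max l <= list_max l) by reflexivity.
  apply list_max_le, Forall_forall with (x := S (list_max l)) in H; [lia | apply Hl].
Qed.

Lemma not_Finite_two A : ~ Finite A -> exists a b : A, a <> b.
Proof.
  intro Hinf. apply NNPP. intro Hsub. apply Hinf.
  destruct (classic (inhabited A)) as [[a]|Hempty].
  - exists [a]. intro b. left. apply NNPP. eauto.
  - exists []. intro b. exact (Hempty (inhabits b)).
Qed.

(* Greedy transfinite recursion: give [p] a value not taken below [p]. *)
Lemma injects_of_small_initial_segments {P Y : Type} (lt : P -> P -> Prop) :
  well_founded lt -> (forall p q, lt p q \/ p = q \/ lt q p) -> inhabited Y ->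
  (forall p, ~ injects Y {q | lt q p}) -> injects P Y.
Proof.
  intros Hwf Htri [y0] Hsmall.
  pose (F := Fix Hwf (fun _ => Y) (fun p rec =>
               epsilon (inhabits y0) (fun y => forall q (h : lt q p), rec q h <> y))).
  assert (Feq : forall p, F p = epsilon (inhabits y0) (fun y => forall q, lt q p -> F q <> y)).
  { intro p. unfold F at 1. rewrite Fix_eq; [reflexivity|].
    intros p' f g Hfg. replace g with f; [reflexivity|].
    extensionality q. extensionality h. apply Hfg. }
  assert (Fnew : forall p q, lt q p -> F q <> F p).
  { intro p. rewrite (Feq p).
    apply (epsilon_spec (inhabits y0) (fun y => forall q, lt q p -> F q <> y)).
    apply NNPP. intro Hcover. apply (Hsmall p).
    assert (Hpre : forall y, exists q : {q | lt q p}, F (proj1_sig q) = y).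
    { intro y. apply NNPP. intro Hy. apply Hcover. exists y.
      intros q Hq E. apply Hy. exists (exist _ q Hq). exact E. }
    apply choice in Hpre as [g Hg]. exists g.
    intros y y' E. rewrite <- (Hg y), <- (Hg y'), E. reflexivity. }
  exists F. intros p q E. destruct (Htri p q) as [H|[H|H]]; [| exact H |]; exfalso.
  - exact (Fnew q p H E).
  - exact (Fnew p q H (eq_sym E)).
Qed.

Section Hessenberg.

Context {K : Type} (ltK : K -> K -> Prop).
Hypothesis wo : well_order ltK.

Definition leK (a b : K) : Prop := ltK a b \/ a = b.

Definition maxK (a b : K) : K := if excluded_middle_informative (ltK a b) then b else a.

Lemma maxK_cases a b : maxK a b = a \/ maxK a b = b.
Proof. unfold maxK. destruct (excluded_middle_informative _); auto. Qed.

Lemma le_maxK_l a b : leK a (maxK a b).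
Proof. unfold leK, maxK. destruct (excluded_middle_informative _); auto. Qed.

Lemma le_maxK_r a b : leK b (maxK a b).
Proof.
  destruct wo as [_ [_ Htri]]. unfold leK, maxK.
  destruct (excluded_middle_informative _) as [|Hab]; auto.
  destruct (Htri a b) as [|[|]]; auto; contradiction.
Qed.

Lemma leK_trans a b c : leK a b -> leK b c -> leK a c.
Proof.
  destruct wo as [_ [Htr _]]. unfold leK.
  intros [Hab|<-] [Hbc|<-]; eauto.
Qed.

Definition godel (p q : K * K) : Prop :=
  slexprod K (K * K) ltK (slexprod K K ltK ltK)
    (maxK (fst p) (snd p), p) (maxK (fst q) (snd q), q).

Lemma godel_wf : well_founded godel.
Proof.
  destruct wo as [Hwf _].
  apply (wf_inverse_image _ _ _ (fun p => (maxK (fst p) (snd p), p))).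
  apply wf_slexprod; [exact Hwf | apply wf_slexprod; exact Hwf].
Qed.

Lemma godel_total p q : godel p q \/ p = q \/ godel q p.
Proof.
  destruct wo as [_ [_ Htri]]. destruct p as [a b], q as [c d]. unfold godel; simpl.
  destruct (Htri (maxK a b) (maxK c d)) as [H|[H|H]];
    [left; apply left_slex, H | rewrite H | right; right; apply left_slex, H].
  destruct (Htri a c) as [H1|[<-|H1]];
    [left; apply right_slex, left_slex, H1 | | right; right; apply right_slex, left_slex, H1].
  destruct (Htri b d) as [H2|[<-|H2]];
    [left; apply right_slex, right_slex, H2 | auto
    | right; right; apply right_slex, right_slex, H2].
Qed.

Lemma godel_below p q :
  godel q p -> leK (fst q) (maxK (fst p) (snd p)) /\ leK (snd q) (maxK (fst p) (snd p)).
Proof.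
  intro H. assert (Hmax : leK (maxK (fst q) (snd q)) (maxK (fst p) (snd p))).
  { unfold godel in H. inversion H; [left; assumption | right; congruence]. }
  split; eapply leK_trans; [apply le_maxK_l | exact Hmax | apply le_maxK_r | exact Hmax].
Qed.

Definition initial_segment (x : K) : Type := {y : K | ltK y x}.

Definition square_small (x : K) : Prop :=
  Finite (initial_segment x) \/
  injects (initial_segment x * initial_segment x) (initial_segment x).

Definition truncate (m a : K) : option (initial_segment m) :=
  match excluded_middle_informative (ltK a m) with
  | left h => Some (exist _ a h)
  | right _ => None
  end.

Lemma truncate_inj m a b : leK a m -> leK b m -> truncate m a = truncate m b -> a = b.
Proof.
  unfold truncate, leK.
  destruct (excluded_middle_informative (ltK a m)), (excluded_middle_informative (ltK b m));
    intros Ha Hb E; try discriminate.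
  - injection E. auto.
  - destruct Ha, Hb; congruence.
Qed.

Lemma not_injects_option_square (D : Type) (m : K) :
  square_small m -> ~ Finite D -> ~ injects D (initial_segment m) ->
  ~ injects D (option (initial_segment m) * option (initial_segment m)).
Proof.
  intros Hm Hinf Hsmall HD.
  destruct (classic (Finite (initial_segment m))) as [Hfin|Hinf_m].
  - apply Hinf. apply (Finite_injects _ _ HD), Finite_prod; apply Finite_option, Hfin.
  - destruct Hm as [|Hsq]; [contradiction|].
    destruct (not_Finite_two _ Hinf_m) as [a [b Hab]].
    pose proof (injects_option_square _ a b Hab) as Hopt.
    apply Hsmall, (injects_trans _ _ _ HD), (injects_trans _ _ _ (injects_prod _ _ _ _ Hopt Hopt)).
    exact (injects_trans _ _ _ (injects_prod _ _ _ _ Hsq Hsq) Hsq).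
Qed.

(* The Goedel-initial segment below [(a, b)] lies in [(m + 1) * (m + 1)] for [m = max a b]
   in [D], and such squares are too small to contain [D]. *)
Lemma square_injects (D : K -> Prop) :
  ~ Finite {a | D a} ->
  (forall m, D m -> ~ injects {a | D a} (initial_segment m)) ->
  (forall m, D m -> square_small m) ->
  injects ({a | D a} * {a | D a}) {a | D a}.
Proof.
  intros Hinf Hcard Hsmall.
  pose (val2 := fun p : {a | D a} * {a | D a} => (proj1_sig (fst p), proj1_sig (snd p))).
  apply (injects_of_small_initial_segments (fun p q => godel (val2 p) (val2 q))).
  - apply wf_inverse_image, godel_wf.
  - intros [[a ha] [b hb]] [[c hc] [d hd]].
    destruct (godel_total (a, b) (c, d)) as [H|[H|H]]; auto.
    injection H as <- <-. right; left. repeat f_equal; apply proof_irrelevance.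
  - destruct (not_Finite_two _ Hinf) as [a _]. exact (inhabits a).
  - intros [[a ha] [b hb]] Hp. set (m := maxK a b).
    assert (Dm : D m) by (destruct (maxK_cases a b) as [E|E]; unfold m; rewrite E; assumption).
    apply (not_injects_option_square _ m (Hsmall m Dm) Hinf (Hcard m Dm)).
    apply (injects_trans _ _ _ Hp).
    exists (fun q => let '(c, d) := val2 (proj1_sig q) in (truncate m c, truncate m d)).
    intros [[[c hc] [d hd]] Hq] [[[c' hc'] [d' hd']] Hq'] E. simpl in *.
    injection E as Ec Ed.
    destruct (godel_below _ _ Hq) as [Hc Hd], (godel_below _ _ Hq') as [Hc' Hd']. simpl in *.
    apply truncate_inj in Ec, Ed; auto. subst c' d'.
    apply subset_eq_compat. repeat f_equal; apply proof_irrelevance.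
Qed.

Lemma square_small_all x : square_small x.
Proof.
  destruct wo as [Hwf [Htr _]]. induction (Hwf x) as [x _ IH].
  destruct (classic (Finite (initial_segment x))) as [Hfin|Hinf]; [left; exact Hfin | right].
  destruct (classic (exists y, ltK y x /\ injects (initial_segment x) (initial_segment y)))
    as [[y [Hyx Hxy]]|Hnone].
  - assert (Hyx' : injects (initial_segment y) (initial_segment x)).
    { exists (fun v => exist _ (proj1_sig v) (Htr _ _ _ (proj2_sig v) Hyx)).
      intros [u hu] [v hv] E. injection E as E. apply subset_eq_compat, E. }
    destruct (IH y Hyx) as [Hfin|Hsq].
    + exfalso. exact (Hinf (Finite_injects _ _ Hxy Hfin)).
    + exact (injects_trans _ _ _ (injects_prod _ _ _ _ Hxy Hxy) (injects_trans _ _ _ Hsq Hyx')).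
  - apply (square_injects (fun a => ltK a x)); [exact Hinf | | exact IH].
    intros m Hm Hxm. apply Hnone. eauto.
Qed.

End Hessenberg.

Lemma infinite_cardinal_square {K : Type} (ltK : K -> K -> Prop) :
  infinite_cardinal ltK -> injects (K * K) K.
Proof.
  intros [wo [[f Hf] Hcard]].
  pose (D := fun _ : K => True).
  assert (HKD : injects K {a | D a}).
  { exists (fun a => exist D a I). intros a b E. injection E. auto. }
  assert (HDK : injects {a | D a} K).
  { exists (@proj1_sig _ _). intros [a []] [b []] E. apply subset_eq_compat, E. }
  apply (injects_trans _ _ _ (injects_prod _ _ _ _ HKD HKD)), (fun H => injects_trans _ _ _ H HDK).
  apply (square_injects ltK wo D).
  - intro Hfin. apply nat_not_Finite.
    exact (Finite_injects _ _ (injects_trans _ _ _ (ex_intro _ f Hf) HKD) Hfin).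
  - intros m _ [g Hg]. apply (Hcard m (fun a => g (exist D a I))).
    intros u v E. apply Hg in E. injection E. auto.
  - intros m _. apply square_small_all, wo.
Qed.

Lemma infinite_cardinal_option_square {K : Type} (ltK : K -> K -> Prop) :
  infinite_cardinal ltK -> injects (option (K * K)) K.
Proof.
  intro Hcard. pose proof (infinite_cardinal_square ltK Hcard) as Hsq.
  destruct Hcard as [_ [[f Hf] _]].
  assert (Hne : (f 0, f 0) <> (f 1, f 0)).
  { intro E. injection E as E. apply Hf in E. discriminate. }
  apply (injects_trans _ _ _ (injects_option_square _ _ _ Hne)).
  exact (injects_trans _ _ _ (injects_prod _ _ _ _ Hsq Hsq) Hsq).
Qed.

Definition restrict {X : Type} (S : X -> Prop) (T : X -> X -> Prop) (a b : {x | S x}) : Prop :=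
  T (proj1_sig a) (proj1_sig b).

Lemma well_order_restrict {X : Type} (S : X -> Prop) (T : X -> X -> Prop) :
  well_order T -> well_order (restrict S T).
Proof.
  intros [Hwf [Htr Htri]]. split; [|split].
  - exact (wf_inverse_image _ _ T (@proj1_sig _ _) Hwf).
  - intros a b c. apply Htr.
  - intros [a ha] [b hb]. unfold restrict; simpl.
    destruct (Htri a b) as [H|[<-|H]]; auto.
    right; left. apply subset_eq_compat, eq_refl.
Qed.

Definition lt_top {Y : Type} (R : Y -> Y -> Prop) (o o' : option Y) : Prop :=
  match o, o' with
  | Some a, Some b => R a b
  | Some _, None => True
  | None, _ => False
  end.

Lemma well_order_lt_top {Y : Type} (R : Y -> Y -> Prop) : well_order R -> well_order (lt_top R).
Proof.
  intros [Hwf [Htr Htri]].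
  assert (HSome : forall a, Acc (lt_top R) (Some a)).
  { intro a. induction (Hwf a) as [a _ IH]. constructor.
    intros [b|] H; [exact (IH b H) | contradiction]. }
  split; [|split].
  - intros [a|]; [apply HSome|]. constructor. intros [b|] H; [apply HSome | contradiction].
  - intros [a|] [b|] [c|]; simpl; eauto; tauto.
  - intros [a|] [b|]; simpl; auto. destruct (Htri a b) as [H|[<-|H]]; auto.
Qed.

Definition lex_sum {X Y : Type}
  (ltX : X -> X -> Prop) (S : X -> Y -> Prop) (T : X -> Y -> Y -> Prop)
  (p q : {p : X * Y | S (fst p) (snd p)}) : Prop :=
  ltX (fst (proj1_sig p)) (fst (proj1_sig q)) \/
  (fst (proj1_sig p) = fst (proj1_sig q) /\
   T (fst (proj1_sig q)) (snd (proj1_sig p)) (snd (proj1_sig q))).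

Lemma well_order_lex_sum {X Y : Type}
  (ltX : X -> X -> Prop) (S : X -> Y -> Prop) (T : X -> Y -> Y -> Prop) :
  well_order ltX -> (forall x, well_order (restrict (S x) (T x))) -> well_order (lex_sum ltX S T).
Proof.
  intros [Xwf [Xtr Xtri]] HT. split; [|split].
  - assert (Hacc : forall x (b : {y | S x y}),
               Acc (lex_sum ltX S T)
                   (exist (fun p => S (fst p) (snd p)) (x, proj1_sig b) (proj2_sig b))).
    { intro x. induction (Xwf x) as [x _ IHx]. intro b.
      induction (proj1 (HT x) b) as [[y h] _ IHy].
      constructor. intros [[x' y'] h'] [Hlt|[Ex Hlt]]; simpl in *.
      - exact (IHx x' Hlt (exist _ y' h')).
      - subst x'. exact (IHy (exist _ y' h') Hlt). }
    intros [[x y] h]. exact (Hacc x (exist _ y h)).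
  - intros [[x1 y1] h1] [[x2 y2] h2] [[x3 y3] h3]; unfold lex_sum; simpl.
    intros [H12|[<- H12]] [H23|[<- H23]]; eauto.
    right. split; [reflexivity|].
    exact (proj1 (proj2 (HT x1)) (exist _ y1 h1) (exist _ y2 h2) (exist _ y3 h3) H12 H23).
  - intros [[x1 y1] h1] [[x2 y2] h2]; unfold lex_sum; simpl.
    destruct (Xtri x1 x2) as [H|[<-|H]]; auto.
    destruct (proj2 (proj2 (HT x1)) (exist _ y1 h1) (exist _ y2 h2)) as [H|[E|H]]; auto.
    injection E as Ey. right; left. apply subset_eq_compat. rewrite Ey. reflexivity.
Qed.

Definition image_rel {X Y : Type} (g : X -> Y) (R : X -> X -> Prop) (a b : Y) : Prop :=
  exists u v, g u = a /\ g v = b /\ R u v.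

Lemma well_order_image {X Y : Type} (g : X -> Y) (R : X -> X -> Prop) :
  (forall u v, g u = g v -> u = v) -> well_order R ->
  well_order (restrict (fun a => exists u, g u = a) (image_rel g R)).
Proof.
  intros Hg [Hwf [Htr Htri]]. split; [|split].
  - apply (wf_inverse_image _ _ (image_rel g R) (@proj1_sig _ _)).
    assert (Hacc : forall u, Acc (image_rel g R) (g u)).
    { intro u. induction (Hwf u) as [u _ IH]. constructor.
      intros b [u1 [u2 [<- [E H]]]]. apply Hg in E. subst u2. exact (IH u1 H). }
    intro a. constructor. intros b [u1 [u2 [<- _]]]. apply Hacc.
  - intros [a ha] [b hb] [c hc]; unfold restrict; simpl.
    intros [u1 [u2 [<- [<- H12]]]] [u3 [u4 [E [<- H34]]]].
    apply Hg in E. subst u3. exists u1, u4. eauto.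
  - intros [a [u <-]] [b [v <-]]; unfold restrict; simpl.
    destruct (Htri u v) as [H|[<-|H]].
    + left. exists u, v. auto.
    + right; left. apply subset_eq_compat, eq_refl.
    + right; right. exists v, u. auto.
Qed.

Section Rank.

Context {K I : Type} (A : I -> K -> Prop).

Lemma rk_ge_simulation {W1 W2 : Type} (R1 : W1 -> W1 -> Prop) (R2 : W2 -> W2 -> Prop)
  (M : W1 -> W2 -> Prop) :
  (forall v o, M v o -> forall u, R1 u v -> exists u', R2 u' o /\ M u u') ->
  forall B o, rk_ge A R2 B o -> forall v, M v o -> rk_ge A R1 B v.
Proof.
  intro HM. fix IH 3. intros B o Hrk. destruct Hrk as [B o Hstep].
  intros v Hvo. constructor. intros u Huv.
  destruct (HM v o Hvo u Huv) as [u' [Hu'o Hu]].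
  destruct (Hstep u' Hu'o) as [a [Hout Hrk]].
  exists a. split; [exact Hout | exact (IH _ u' Hrk u Hu)].
Qed.

Definition rank_unbounded (F : (K -> Prop) -> Prop) : Prop :=
  forall (W : Type) (R : W -> W -> Prop), well_order R -> forall w : W,
    injects {v : W | R v w} K -> exists C, F C /\ rk_ge A R C w.

Definition refine (y : K) (F : (K -> Prop) -> Prop) (C' : K -> Prop) : Prop :=
  exists C a, F C /\ C y /\ ~ A a y /\ C' = (fun x => C x /\ A a x).

Lemma rank_unbounded_inhabited F : rank_unbounded F -> exists C, F C.
Proof.
  intro HF. destruct (HF unit (fun _ _ => False)) with (w := tt) as [C [HC _]]; eauto.
  - split; [intro u; constructor; contradiction | split; [contradiction | intros [] []; auto]].
  - exists (fun v : {v : unit | False} => False_rect K (proj2_sig v)). intros [_ []].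
Qed.

(* Coding the witness by a well-order on a subset of [K] lets [choice] pick one such
   witness for every point of [K] at once. *)
Lemma rank_bound_code (P : (K -> Prop) -> Prop) {W : Type} (R : W -> W -> Prop) (w : W) :
  well_order R -> injects {v | R v w} K -> ~ (exists C, P C /\ rk_ge A R C w) ->
  exists (S : K -> Prop) (T : K -> K -> Prop), well_order (restrict S T) /\
              ~ (exists C, P C /\ rk_ge A (lt_top (restrict S T)) C None).
Proof.
  intros HR [g Hg] Hfail.
  pose (S := fun a => exists u, g u = a).
  pose (code := fun u : {v | R v w} => exist S (g u) (ex_intro _ u eq_refl)).
  exists S, (image_rel g (restrict (fun v => R v w) R)).
  split; [exact (well_order_image _ _ Hg (well_order_restrict _ _ HR))|].
  intros [C [HP Hrk]]. apply Hfail. exists C. split; [exact HP|].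
  destruct HR as [_ [Htr _]].
  pose (M := fun v o => (v = w /\ o = None) \/ exists h : R v w, o = Some (code (exist _ v h))).
  eapply (rk_ge_simulation R _ M); [| exact Hrk | left; auto].
  intros v o [[-> ->]|[h ->]] u Hu.
  - exists (Some (code (exist _ u Hu))). split; [constructor | right; exists Hu; reflexivity].
  - exists (Some (code (exist _ u (Htr _ _ _ Hu h)))). split.
    + exists (exist _ u (Htr _ _ _ Hu h)), (exist _ v h). auto.
    + right. exists (Htr _ _ _ Hu h). reflexivity.
Qed.

Lemma rk_ge_step {W : Type} (R : W -> W -> Prop) (B : K -> Prop) (w v : W) :
  rk_ge A R B w -> R v w ->
  exists a, (exists x, B x /\ ~ A a x) /\ rk_ge A R (fun x => B x /\ A a x) v.
Proof. intro H. destruct H as [B w Hstep]. exact (Hstep v). Qed.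

(* If every [refine y F] failed, the failure ordinals, summed over [y] and topped twice,
   would give an ordinal below [kappa^+] that no member of [F] reaches. *)
Lemma rank_unbounded_refine (ltK : K -> K -> Prop) (F : (K -> Prop) -> Prop) :
  well_order ltK -> injects (option (K * K)) K ->
  rank_unbounded F -> exists y, rank_unbounded (refine y F).
Proof.
  intros wo HK HF. apply NNPP. intro Hnone.
  assert (Hcode : forall y, exists ST : (K -> Prop) * (K -> K -> Prop),
             well_order (restrict (fst ST) (snd ST)) /\
             ~ (exists C, refine y F C /\ rk_ge A (lt_top (restrict (fst ST) (snd ST))) C None)).
  { intro y. assert (Hy : ~ rank_unbounded (refine y F)) by (intro H; apply Hnone; eauto).
    apply not_all_ex_not in Hy as [W Hy]. apply not_all_ex_not in Hy as [R Hy].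
    apply not_all_ex_not in Hy as [HR Hy]. apply not_all_ex_not in Hy as [w Hy].
    apply imply_to_and in Hy as [Hsmall Hfail].
    destruct (rank_bound_code _ R w HR Hsmall Hfail) as [S [T HST]]. exists (S, T). exact HST. }
  apply choice in Hcode as [ST HST].
  pose (S := fun y => fst (ST y)). pose (T := fun y => snd (ST y)).
  pose (Q := {p : K * K | S (fst p) (snd p)}).
  pose (ltW := lt_top (lt_top (lex_sum ltK S T)) : option (option Q) -> option (option Q) -> Prop).
  assert (HW : well_order ltW).
  { apply well_order_lt_top, well_order_lt_top, well_order_lex_sum; [exact wo|].
    intro y. apply HST. }
  assert (Hsmall : injects {v | ltW v None} K).
  { destruct HK as [k Hk].
    exists (fun v => match proj1_sig v with
                     | Some (Some p) => k (Some (proj1_sig p))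
                     | _ => k None
                     end).
    intros [[[p|]|] hu] [[[q|]|] hv]; simpl; intro E; try contradiction;
      apply Hk in E; try discriminate; apply subset_eq_compat; try reflexivity.
    injection E as E. do 2 f_equal. destruct p, q. apply subset_eq_compat, E. }
  destruct (HF _ ltW HW None Hsmall) as [C [HC Hrk]].
  destruct (rk_ge_step _ _ _ (Some None) Hrk) as [a [[y [Cy Nay]] Hrk']]; [constructor|].
  apply (proj2 (HST y)). exists (fun x => C x /\ A a x). split; [exists C, a; auto|].
  pose (embed := fun s : {b | S y b} =>
                   exist (fun p : K * K => S (fst p) (snd p)) (y, proj1_sig s) (proj2_sig s) : Q).
  pose (M := fun (o : option {b | S y b}) (v : option (option Q)) =>
               (o = None /\ v = Some None) \/ exists s, o = Some s /\ v = Some (Some (embed s))).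
  eapply (rk_ge_simulation _ ltW M); [| exact Hrk' | left; auto].
  intros o v [[-> ->]|[s [-> ->]]] [s'|] Hu; try contradiction;
    exists (Some (Some (embed s'))); (split; [| right; eauto]).
  - constructor.
  - right. split; [reflexivity | exact Hu].
Qed.

Definition separated (x : nat -> K) : Prop :=
  forall l k, l < k -> exists a, ~ A a (x l) /\ forall j, l < j <= k -> A a (x j).

Lemma refine_chain_separated (x : nat -> K) (state : nat -> (K -> Prop) -> Prop) :
  (forall n C, state (S n) C -> refine (x n) (state n) C) ->
  forall n C, state n C -> forall l, l < n ->
    exists a, ~ A a (x l) /\ (forall z, C z -> A a z) /\ (forall j, l < j < n -> A a (x j)).
Proof.
  intro Hchain. induction n as [|n IH]; intros C HC l Hl; [lia|].
  destruct (Hchain n C HC) as [C' [a [HC' [Cx [Nax ->]]]]].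
  destruct (Nat.eq_dec l n) as [->|Hne].
  - exists a. split; [exact Nax|]. split; [intros z [_ Hz]; exact Hz | intros; lia].
  - destruct (IH C' HC' l ltac:(lia)) as [a' [Na' [Sub' Hj']]].
    exists a'. split; [exact Na'|]. split; [intros z [Hz _]; auto|].
    intros j Hj. destruct (Nat.eq_dec j n) as [->|Hjn]; [apply Sub', Cx | apply Hj'; lia].
Qed.

Lemma separated_sequence_exists (ltK : K -> K -> Prop) :
  well_order ltK -> injects (option (K * K)) K ->
  rank_unbounded (fun C => C = fun _ => True) -> exists x, separated x.
Proof.
  intros wo HK H0.
  assert (HK0 : inhabited K) by (destruct HK as [k _]; exact (inhabits (k None))).
  pose (next := fun F => epsilon HK0 (fun y => rank_unbounded (refine y F))).
  pose (state := fun n => Nat.iter n (fun F => refine (next F) F) (fun C => C = fun _ => True)).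
  assert (Hbig : forall n, rank_unbounded (state n)).
  { induction n as [|n IH]; [exact H0|].
    apply (epsilon_spec HK0 (fun y => rank_unbounded (refine y (state n)))).
    exact (rank_unbounded_refine ltK _ wo HK IH). }
  exists (fun n => next (state n)). intros l k Hl.
  destruct (rank_unbounded_inhabited _ (Hbig (S k))) as [C HC].
  destruct (refine_chain_separated (fun n => next (state n)) state (fun n C H => H)
              (S k) C HC l ltac:(lia)) as [a [Nal [_ Hj]]].
  exists a. split; [exact Nal|]. intros j Hj'. apply Hj. lia.
Qed.

Lemma separated_injective (x : nat -> K) : separated x -> forall m n, x m = x n -> m = n.
Proof.
  intros Hx m n E. destruct (lt_eq_lt_dec m n) as [[H|H]|H]; auto; exfalso.
  - destruct (Hx m n H) as [a [Na Hj]]. apply Na. rewrite E. apply Hj. lia.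
  - destruct (Hx n m H) as [a [Na Hj]]. apply Na. rewrite <- E. apply Hj. lia.
Qed.

Lemma increasing_lt (s : nat -> nat) : (forall n, s n < s (S n)) -> forall m n, m < n -> s m < s n.
Proof.
  intros Hs m n H. induction H as [|n H IH]; [apply Hs|]. specialize (Hs n). lia.
Qed.

Lemma separated_subsequence (x : nat -> K) (s : nat -> nat) :
  separated x -> (forall n, s n < s (S n)) -> separated (fun n => x (s n)).
Proof.
  intros Hx Hs l k Hlk. pose proof (increasing_lt s Hs) as Hmono.
  destruct (Hx (s l) (s k) (Hmono l k Hlk)) as [a [Na Hj]].
  exists a. split; [exact Na|]. intros j Hj'. apply Hj. split; [apply Hmono; lia|].
  destruct (Nat.eq_dec j k) as [->|Hne]; [lia | apply Nat.lt_le_incl, Hmono; lia].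
Qed.

Lemma separated_interval (f : nat -> K) : separated f ->
  forall l k, l < k -> exists a, forall x,
    (A a x /\ (exists i, l <= i <= k /\ x = f i)) <-> (exists i, l < i <= k /\ x = f i).
Proof.
  intros Hf l k Hlk. destruct (Hf l k Hlk) as [a [Na Hj]]. exists a. intro x. split.
  - intros [Ha [i [Hi ->]]]. exists i. split; [|reflexivity].
    destruct (Nat.eq_dec i l) as [->|]; [contradiction | lia].
  - intros [i [Hi ->]]. split; [apply Hj, Hi | exists i; split; [lia | reflexivity]].
Qed.

End Rank.

Lemma wf_minimal {X : Type} (R : X -> X -> Prop) (P : X -> Prop) :
  well_founded R -> (exists x, P x) -> exists x, P x /\ forall y, P y -> ~ R y x.
Proof.
  intros Hwf [x Px]. apply NNPP. intro Hnone. induction (Hwf x) as [x _ IH].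
  apply Hnone. exists x. split; [exact Px|]. intros y Py Ryx. exact (IH y Ryx Py).
Qed.

(* Jump each time to the index, beyond the current one, where [z] is minimal. *)
Lemma increasing_subsequence {K : Type} (ltK : K -> K -> Prop) (z : nat -> K) :
  well_order ltK -> (forall m n, z m = z n -> m = n) ->
  exists s : nat -> nat, (forall n, s n < s (S n)) /\ (forall n, ltK (z (s n)) (z (s (S n)))).
Proof.
  intros [Hwf [_ Htri]] Hz.
  pose (next := fun n => epsilon (inhabits 0)
                  (fun j => n < j /\ forall j', n < j' -> ~ ltK (z j') (z j))).
  assert (Hnext : forall n, n < next n /\ forall j', n < j' -> ~ ltK (z j') (z (next n))).
  { intro n. apply epsilon_spec.
    destruct (wf_minimal ltK (fun v => exists j, n < j /\ z j = v) Hwf) as [v [[j [Hj <-]] Hmin]].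
    - exists (z (S n)), (S n). split; [lia | reflexivity].
    - exists j. split; [exact Hj|]. intros j' Hj'. apply Hmin. eauto. }
  exists (fun n => Nat.iter (S n) next 0).
  assert (Hs : forall n, Nat.iter n next 0 < Nat.iter (S n) next 0) by (intro n; apply Hnext).
  split; [intro n; apply Hs|]. intro n.
  destruct (Htri (z (Nat.iter (S n) next 0)) (z (Nat.iter (S (S n)) next 0))) as [H|[H|H]]; auto.
  - apply Hz in H. specialize (Hs (S n)). lia.
  - exfalso. apply (proj2 (Hnext (Nat.iter n next 0)) (Nat.iter (S (S n)) next 0)); [|exact H].
    pose proof (Hs n). pose proof (Hs (S n)). simpl in *. lia.
Qed.

Theorem claim2p3 (K : Type) (ltK : K -> K -> Prop) (I : Type)
  (ltI : I -> I -> Prop) (A : I -> K -> Prop) :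
  infinite_cardinal ltK ->
  well_order ltI ->
  not_in_prev_ideal ltI A ->
  rk_ge_kappa_plus A ->
  exists f : nat -> K,
    (forall n, ltK (f n) (f (S n))) /\
    (forall l k, l < k ->
       exists a : I, forall x,
         (A a x /\ (exists i, l <= i <= k /\ x = f i)) <->
         (exists i, l < i <= k /\ x = f i)).
Proof.
  intros Hcard _ _ Hrk. pose proof (proj1 Hcard) as wo.
  assert (Htop : rank_unbounded A (fun C => C = fun _ => True)).
  { intros W R HR w Hw. exists (fun _ => True). split; [reflexivity | exact (Hrk W R HR w Hw)]. }
  destruct (separated_sequence_exists A ltK wo (infinite_cardinal_option_square ltK Hcard) Htop)
    as [x Hx].
  destruct (increasing_subsequence ltK x wo (separated_injective A x Hx)) as [s [Hs Hxs]].
  exists (fun n => x (s n)). split; [exact Hxs|].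
  exact (separated_interval A _ (separated_subsequence A x s Hx Hs)).
Qed.
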